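(* Let $G$ be a graph with $n=|V(G)|$ vertices and $m=|E(G)|$ edges, with vertex and edge labels $\tau:V(G)\cup E(G)\to\mathcal L$ from a finite alphabet $\mathcal L$, and let $\ell\ge0$. Consider the algorithm that initializes, for each $v\in V(G)$, a sparse vector $\Phi^v_0$ over label sequences with $\Phi^v_0(\tau(v))=1$, and for $i=1,\dots,\ell$, for all $u\in V(G)$, $v\in N(u)$ and all label sequences $s$ with $\Phi^v_{i-1}(s)>0$, sets $s'\gets(\tau(u),\tau(uv))$ concatenated with $s$ and increases $\Phi^u_i(s')$ by $\Phi^v_{i-1}(s)$; finally it returns $\sum_{v\in V(G)}\Phi^v_\ell$. This algorithm computes the feature vector $\phi^=_\ell(G)$ in time $O(n+\ell(n+m)s)$, where $s$ is the maximum number of different label sequences of $(\ell-1)$-walks starting at a vertex of $G$.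
   Context: Graphs are finite and undirected; $N(u)$ is the neighborhood of $u$. A walk of length $\ell$ is a sequence $w=(v_0,e_1,v_1,\dots,e_\ell,v_\ell)$ with $e_i=v_{i-1}v_i\in E(G)$; its label sequence is $\tau(w)=(\tau(v_0),\tau(e_1),\dots,\tau(v_\ell))\in\mathcal L^{2\ell+1}$. The feature vector $\phi^=_\ell(G)$ has one component for each $s\in\mathcal L^{2\ell+1}$, equal to the number of walks $w$ of length $\ell$ in $G$ with $\tau(w)=s$; it is a feature map of the $\ell$-walk kernel with Dirac vertex and edge kernels on labels, $K^=_\ell(G,H)=\sum_{w\in\mathcal W_\ell(G)}\sum_{w'\in\mathcal W_\ell(H)}\prod_{i=0}^{\ell}\delta(\tau(v_i),\tau(v'_i))\prod_{i=1}^{\ell}\delta(\tau(e_i),\tau(e'_i))$, where $\delta(a,b)=1$ if $a=b$ and $0$ otherwise. Feature vectors are stored sparsely (e.g. in hash tables keyed by label sequences). *)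

From mathcomp Require Import all_boot.
Set Implicit Arguments. Unset Strict Implicit. Unset Printing Implicit Defensive.

(* A labeled graph: vertex type V (finite), adjacency relation e (assumed
   symmetric and irreflexive in the theorem), vertex labels tauV : V -> L and
   edge labels tauE : {set V} -> L (an edge uv is the 2-set [set u; v]). *)

Section Walks.
Variables (L V : finType) (e : rel V) (tauV : V -> L) (tauE : {set V} -> L).

Definition nverts : nat := #|V|.
Definition edges : {set {set V}} :=
  [set [set x; y] | x in [set: V], y in [set: V] & e x y].
Definition nedges : nat := #|edges|.

(* A walk of length l is the vertex sequence v_0 ... v_l (edges are
   determined by consecutive vertices since the graph is simple). *)
Definition is_walk (l : nat) (w : l.+1.-tuple V) : bool :=
  path e (thead w) (behead w).

Definition wlabel (l : nat) (w : l.+1.-tuple V) : seq L :=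
  tauV (thead w) ::
  flatten [seq [:: tauE [set p.1; p.2]; tauV p.2]
          | p <- zip (thead w :: behead w) (behead w)].

Definition phi_eq (l : nat) (s : seq L) : nat :=
  #|[set w : l.+1.-tuple V | is_walk w && (wlabel w == s)]|.

Definition nlabseq_from (k : nat) (v : V) : nat :=
  size (undup [seq wlabel w | w <- enum [set w : k.+1.-tuple V |
                                           is_walk w && (thead w == v)]]).

Definition smax (l : nat) : nat :=
  maxn 1 (\max_(v : V) nlabseq_from l.-1 v).

(* ---------- Sparse vectors (hash tables modeled as association lists) *)
Definition sv := seq (seq L * nat).

Fixpoint sv_get (t : sv) (s : seq L) : nat :=
  match t with
  | [::] => 0
  | (k, c) :: t' => if k == s then c else sv_get t' s
  end.

Fixpoint sv_add (t : sv) (s : seq L) (c : nat) : sv :=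
  match t with
  | [::] => [:: (s, c)]
  | (k, d) :: t' => if k == s then (k, d + c) :: t'
                    else (k, d) :: sv_add t' s c
  end.

(* Cost model: each hash-table lookup/update, each visited vertex u, each
   visited neighbour v (adjacency lists), and each inspected table entry
   counts one step. *)

Definition upd_entry (u v : V) (acc : sv * nat) (sc : seq L * nat) : sv * nat :=
  if 0 < sc.2 then
    (sv_add acc.1 (tauV u :: tauE [set u; v] :: sc.1) sc.2, acc.2.+1)
  else (acc.1, acc.2.+1).

Definition upd_nb (Phi : V -> sv) (u : V) (acc : sv * nat) (v : V) : sv * nat :=
  foldl (upd_entry u v) (acc.1, acc.2.+1) (Phi v).

Definition new_vec (Phi : V -> sv) (u : V) : sv * nat :=
  foldl (upd_nb Phi u) ([::], 1) [seq v <- enum V | e u v].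

Fixpoint iter_phi (i : nat) : (V -> sv) * nat :=
  match i with
  | 0 => (fun v => [:: ([:: tauV v], 1)], #|V|)
  | i'.+1 =>
      let P := (iter_phi i').1 in
      (fun u => (new_vec P u).1, (iter_phi i').2 + \sum_(u : V) (new_vec P u).2)
  end.

Definition add_entry (acc : sv * nat) (sc : seq L * nat) : sv * nat :=
  (sv_add acc.1 sc.1 sc.2, acc.2.+1).

Definition sum_vecs (Phi : V -> sv) : sv * nat :=
  foldl (fun acc v => foldl add_entry (acc.1, acc.2.+1) (Phi v))
        ([::], 0) (enum V).

Definition walk_algo (l : nat) : sv := (sum_vecs (iter_phi l).1).1.

Definition walk_algo_cost (l : nat) : nat :=
  (iter_phi l).2 + (sum_vecs (iter_phi l).1).2.

End Walks.

From mathcomp Require Import all_boot zify.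
Set Implicit Arguments. Unset Strict Implicit. Unset Printing Implicit Defensive.

(* By induction on i, the table Phi^u_i has no repeated key and its entry at s
   is the number of i-walks from u with label sequence s: prepending
   (tau u, tau uv) to the walks from a neighbour v gives exactly the walks from
   u through v.  Summing over u yields phi_l.  For the running time, step i
   inspects, for every u and every neighbour v, each entry of Phi^v_(i-1); that
   table has at most as many entries as there are label sequences of
   (i-1)-walks from v, which is at most the number for (l-1)-walks because a
   walk extends by going back along its last edge.  With degrees summing to at
   most 2m, each step costs O(n + m s). *)

Lemma eqseq_cat_take_drop (T : eqType) (p x s : seq T) :
  (p ++ x == s) = (p == take (size p) s) && (x == drop (size p) s).
Proof.
case: (leqP (size p) (size s)) => [le_ps|lt_sp].
  by rewrite -{1}(cat_take_drop (size p) s) eqseq_cat // size_take_min (minn_idPl le_ps).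
rewrite take_oversize ?(ltnW lt_sp) //.
have /negbTE -> : p != s by apply: contraTneq lt_sp => ->; rewrite ltnn.
by apply/negbTE; apply: contraTneq lt_sp => <-; rewrite size_cat -leqNgt leq_addr.
Qed.

Lemma count_andb_const (T : Type) (b : bool) (P : pred T) (s : seq T) :
  count (fun x => b && P x) s = b * count P s.
Proof. by case: b; rewrite ?mul1n ?mul0n //= count_pred0. Qed.

Lemma leq_size_undup_map (T1 T2 : eqType) (f : T1 -> T2) (s1 : seq T2) (s2 : seq T1) :
  {subset s1 <= map f s2} -> size (undup s1) <= size (undup s2).
Proof.
move=> s12; rewrite -(size_map f); apply: uniq_leq_size (undup_uniq s1) _ => x.
by rewrite mem_undup => /s12 /mapP [y ys ->]; rewrite map_f ?mem_undup.
Qed.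

Section SparseVectors.
Variable L : finType.
Implicit Types (t a ts : sv L) (k s : seq L) (c : nat).

Definition keys t : seq (seq L) := map fst t.
Definition pos_entries t : bool := all (fun kc => 0 < kc.2) t.
Definition sv_add_pair t (kc : seq L * nat) : sv L := sv_add t kc.1 kc.2.

Lemma sv_get_add t k c s : sv_get (sv_add t k c) s = sv_get t s + (k == s) * c.
Proof.
elim: t => [|[k' d] t IH] /=; first by case: (k == s); rewrite ?mul1n.
case: (k' =P k) => [->|neq_k'k] /=; first by case: (k == s); rewrite ?mul1n ?addn0.
rewrite IH; case: (k' =P s) => // <-.
by case: (k =P k') => [ek|]; [case: neq_k'k | rewrite addn0].
Qed.

Lemma keys_sv_add t k c : {subset keys (sv_add t k c) <= k :: keys t}.
Proof.
elim: t => [|[k' d] t IH] //= x.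
case: eqP => [->|_]; rewrite !inE; first by case/orP=> ->; rewrite ?orbT.
by case/orP => [->|/IH]; rewrite ?inE ?orbT // => /orP [] ->; rewrite ?orbT.
Qed.

Lemma uniq_keys_sv_add t k c : uniq (keys t) -> uniq (keys (sv_add t k c)).
Proof.
elim: t => [|[k' d] t IH] //= /andP [k't ut].
case: eqP => [_|neq_k'k] /=; first by rewrite k't ut.
rewrite IH // andbT; apply: contra k't => /keys_sv_add.
by rewrite inE => /orP [/eqP ek'k|//]; case: neq_k'k.
Qed.

Lemma pos_entries_sv_add t k c :
  0 < c -> pos_entries t -> pos_entries (sv_add t k c).
Proof.
move=> c_gt0; elim: t => [|[k' d] t IH] /=; first by rewrite c_gt0.
by case/andP=> d_gt0 pt; case: eqP => _ /=; rewrite ?addn_gt0 d_gt0 ?IH.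
Qed.

Lemma size_sv_add t k c : size (sv_add t k c) <= (size t).+1.
Proof. by elim: t => [|[k' d] t IH] //=; case: eqP. Qed.

Lemma sv_get_sum t s :
  uniq (keys t) -> sv_get t s = \sum_(kc <- t) (kc.1 == s) * kc.2.
Proof.
elim: t => [|[k d] t IH] /=; first by rewrite big_nil.
case/andP => kt ut; rewrite big_cons /=; case: eqP => [<-|_]; last by rewrite IH.
rewrite big_seq big1 ?addn0 ?mul1n // => -[k' d'] kd't /=.
by case: eqP => // ek'; case/negP: kt; apply/mapP; exists (k', d').
Qed.

Lemma sv_get_gt0 t k : pos_entries t -> k \in keys t -> 0 < sv_get t k.
Proof.
elim: t => [|[k' d] t IH] //= /andP [d_gt0 pt]; rewrite inE.
case: (k' =P k) => [//|neq_k'k] /orP [/eqP ekk'|]; [by case: neq_k'k | exact: IH].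
Qed.

Lemma sv_get_foldl a ts s :
  sv_get (foldl sv_add_pair a ts) s =
  sv_get a s + \sum_(kc <- ts) (kc.1 == s) * kc.2.
Proof.
elim: ts a => [|kc ts IH] a /=; first by rewrite big_nil addn0.
by rewrite IH big_cons sv_get_add addnA.
Qed.

Lemma uniq_keys_foldl a ts : uniq (keys a) -> uniq (keys (foldl sv_add_pair a ts)).
Proof. by elim: ts a => [|kc ts IH] a //= ua; apply/IH/uniq_keys_sv_add. Qed.

Lemma pos_entries_foldl a ts :
  pos_entries a -> pos_entries ts -> pos_entries (foldl sv_add_pair a ts).
Proof.
elim: ts a => [|kc ts IH] a //= pa /andP [kc_gt0 pts].
by apply: IH => //; apply: pos_entries_sv_add.
Qed.

Lemma size_foldl_sv_add a ts : size (foldl sv_add_pair a ts) <= size a + size ts.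
Proof.
elim: ts a => [|kc ts IH] a /=; first by rewrite addn0.
by apply: leq_trans (IH _) _; rewrite addnS -addSn leq_add2r size_sv_add.
Qed.

End SparseVectors.

Section Algorithm.
Variables (L V : finType) (e : rel V) (tauV : V -> L) (tauE : {set V} -> L).
Implicit Types (Phi : V -> sv L) (t a : sv L).

Definition nbrs u : seq V := [seq v <- enum V | e u v].

Definition extend_entry u v (kc : seq L * nat) : seq L * nat :=
  (tauV u :: tauE [set u; v] :: kc.1, kc.2).

Lemma foldl_upd_entry u v t a n : pos_entries t ->
  foldl (upd_entry tauV tauE u v) (a, n) t =
  (foldl (@sv_add_pair L) a (map (extend_entry u v) t), n + size t).
Proof.
elim: t a n => [|kc t IH] a n /=; first by rewrite addn0.
by case/andP => kc_gt0 pt; rewrite /upd_entry kc_gt0 IH // addSnnS.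
Qed.

Lemma foldl_upd_nb Phi u vs a n : (forall v, pos_entries (Phi v)) ->
  foldl (upd_nb tauV tauE Phi u) (a, n) vs =
  (foldl (@sv_add_pair L) a [seq extend_entry u v kc | v <- vs, kc <- Phi v],
   n + \sum_(v <- vs) (size (Phi v)).+1).
Proof.
move=> posPhi; elim: vs a n => [|v vs IH] a n /=; first by rewrite big_nil addn0.
have -> : upd_nb tauV tauE Phi u (a, n) v =
    (foldl (@sv_add_pair L) a (map (extend_entry u v) (Phi v)), n.+1 + size (Phi v)).
  exact: foldl_upd_entry.
by rewrite IH foldl_cat big_cons addSn -addnS addnA.
Qed.

Lemma new_vecE Phi u : (forall v, pos_entries (Phi v)) ->
  new_vec e tauV tauE Phi u =
  (foldl (@sv_add_pair L) [::] [seq extend_entry u v kc | v <- nbrs u, kc <- Phi v],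
   (\sum_(v <- nbrs u) (size (Phi v)).+1).+1).
Proof. by move=> posPhi; rewrite /new_vec foldl_upd_nb // add1n. Qed.

Lemma foldl_add_entry t a n :
  foldl (@add_entry L) (a, n) t = (foldl (@sv_add_pair L) a t, n + size t).
Proof. by elim: t a n => [|kc t IH] a n /=; rewrite ?addn0 // IH addSnnS. Qed.

Lemma sum_vecsE Phi :
  sum_vecs Phi = (foldl (@sv_add_pair L) [::] (flatten [seq Phi v | v <- enum V]),
                  \sum_(v <- enum V) (size (Phi v)).+1).
Proof.
suff foldl_vecs vs a n :
    foldl (fun acc v => foldl (@add_entry L) (acc.1, acc.2.+1) (Phi v)) (a, n) vs =
    (foldl (@sv_add_pair L) a (flatten [seq Phi v | v <- vs]),
     n + \sum_(v <- vs) (size (Phi v)).+1).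
  by rewrite /sum_vecs foldl_vecs.
elim: vs a n => [|v vs IH] a n /=; first by rewrite big_nil addn0.
by rewrite foldl_add_entry IH foldl_cat big_cons addSn -addnS addnA.
Qed.

End Algorithm.

Lemma sum_size_nbrs (V : finType) (e : rel V) :
  \sum_(u : V) size (nbrs e u) <= 2 * nedges e.
Proof.
have -> : \sum_(u : V) size (nbrs e u) = \sum_(p : V * V | e p.1 p.2) 1.
  rewrite -(pair_big_dep xpredT (fun u v => e u v) (fun _ _ => 1)).
  by apply: eq_bigr => u _; rewrite size_filter -sum1_count big_enum_cond.
rewrite (partition_big (fun p => [set p.1; p.2]) (mem (edges e))) /=; last first.
  by move=> [x y] exy; apply/imset2P; exists x y; rewrite ?inE.
rewrite mulnC -sum_nat_const leq_sum // => _ /imset2P [x y _ _ ->].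
rewrite sum1dep_card (@leq_trans #|[set (x, y); (y, x)]|) //; last first.
  by rewrite cards2 ltnS leq_b1.
apply: subset_leq_card; apply/subsetP => -[a b]; rewrite !inE /= => /andP [_ /eqP exy].
have /set2P ax : a \in [set x; y] by rewrite -exy set21.
have /set2P bx : b \in [set x; y] by rewrite -exy set22.
case: ax bx exy => -> [] -> exy; rewrite ?eqxx ?orbT //.
  by have := set22 x y; rewrite -exy => /set2P [] ->; rewrite eqxx.
by have := set21 x y; rewrite -exy => /set2P [] ->; rewrite eqxx.
Qed.

Section Walks.
Variables (L V : finType) (e : rel V) (tauV : V -> L) (tauE : {set V} -> L).

Fixpoint lab (u : V) (p : seq V) : seq L :=
  tauV u :: (if p is v :: p' then tauE [set u; v] :: lab v p' else [::]).

Fixpoint walks (i : nat) (u : V) : seq (seq V) :=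
  if i is i'.+1 then [seq v :: p | v <- nbrs e u, p <- walks i' v] else [:: [::]].

Definition nlabels (i : nat) (u : V) : nat :=
  size (undup [seq lab u p | p <- walks i u]).

Lemma mem_walks i u p : (p \in walks i u) = (size p == i) && path e u p.
Proof.
elim: i u p => [|i IH] u p /=; first by case: p.
apply/allpairsPdep/idP => [[v [q [vu qv ->]]] /=|].
  by move: vu qv; rewrite mem_filter IH eqSS => /andP [-> _].
case: p => [|v q] //=; rewrite eqSS => /andP [sq /andP [euv pq]].
by exists v, q; rewrite mem_filter euv mem_enum IH sq.
Qed.

Lemma uniq_walks i u : uniq (walks i u).
Proof.
elim: i u => [|i IH] u //=; apply: allpairs_uniq_dep => //.
- by rewrite filter_uniq // enum_uniq.
- by move=> [x y] [x' y'] _ _ [-> ->].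
Qed.

Lemma tuple_walkE i (w : i.+1.-tuple V) : is_walk e w = (behead w \in walks i (thead w)).
Proof. by rewrite mem_walks size_behead size_tuple eqxx. Qed.

Lemma wlabelE i (w : i.+1.-tuple V) : wlabel tauV tauE w = lab (thead w) (behead w).
Proof.
by rewrite /wlabel; elim: (behead w) (thead w) => [|v p IH] u //=; rewrite -IH.
Qed.

Lemma card_walks i (P : V -> seq V -> bool) :
  #|[set w : i.+1.-tuple V | is_walk e w && P (thead w) (behead w)]| =
  \sum_(u <- enum V) count (P u) (walks i u).
Proof.
pose split_walk (w : i.+1.-tuple V) := (thead w, behead w).
have split_walk_inj : injective split_walk.
  move=> w1 w2 [eq_head eq_behead].
  by rewrite [w1]tuple_eta [w2]tuple_eta; apply: val_inj; rewrite /= eq_head eq_behead.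
set W := [set w | _].
have walks_perm : perm_eq [seq split_walk w | w <- enum W]
    [seq up <- [seq (u, p) | u <- enum V, p <- walks i u] | P up.1 up.2].
  apply: uniq_perm.
  - by rewrite (map_inj_uniq split_walk_inj) enum_uniq.
  - rewrite filter_uniq // allpairs_uniq_dep ?enum_uniq //.
      by move=> u _; apply: uniq_walks.
    by move=> [x y] [x' y'] _ _ [-> ->].
  move=> [u p]; rewrite mem_filter /=; apply/mapP/andP.
    case=> w; rewrite mem_enum inE tuple_walkE => /andP [pw Pw] [-> ->].
    by split=> //; apply/allpairsPdep; exists (thead w), (behead w); rewrite mem_enum.
  case=> Pup /allpairsPdep [u' [p' [_ pw [eu ep]]]]; subst u p.
  have sp : size p' == i by move: pw; rewrite mem_walks => /andP [].
  exists [tuple of u' :: Tuple sp] => //.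
  by rewrite mem_enum inE tuple_walkE theadE /= pw.
rewrite cardE -(size_map split_walk) (perm_size walks_perm) size_filter.
rewrite -sum1_count big_mkcond big_allpairs_dep; apply: eq_bigr => u _.
by rewrite -sum1_count [RHS]big_mkcond.
Qed.

Lemma phi_eqE l s :
  phi_eq e tauV tauE l s = \sum_(u <- enum V) count (fun p => lab u p == s) (walks l u).
Proof.
rewrite -(card_walks l (fun u p => lab u p == s)) /phi_eq.
by apply: eq_card => w; rewrite !inE wlabelE.
Qed.

Lemma nlabseq_fromE k v : nlabseq_from e tauV tauE k v = nlabels k v.
Proof.
apply: perm_size; apply: uniq_perm; try exact: undup_uniq.
move=> s; rewrite !mem_undup; apply/mapP/mapP => [[w]|[p]].
  rewrite mem_enum inE tuple_walkE => /andP [pw /eqP <-] ->.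
  by exists (behead w); rewrite ?wlabelE.
rewrite mem_walks => /andP [sp pp] ->.
exists [tuple of v :: Tuple sp]; last by rewrite wlabelE theadE.
by rewrite mem_enum inE tuple_walkE theadE eqxx mem_walks sp pp.
Qed.

End Walks.

Section Invariant.
Variables (L V : finType) (e : rel V) (tauV : V -> L) (tauE : {set V} -> L).
Notation Phi i := (iter_phi e tauV tauE i).1.
Notation lab := (lab tauV tauE).
Notation walks := (walks e).

Definition walk_count i u s : nat := count (fun p => lab u p == s) (walks i u).

Lemma walk_count_S i u s : walk_count i.+1 u s =
  \sum_(v <- nbrs e u)
     ([:: tauV u; tauE [set u; v]] == take 2 s) * walk_count i v (drop 2 s).
Proof.
rewrite /walk_count /= count_flatten sumnE !big_map; apply: eq_bigr => v _.
rewrite count_map -count_andb_const; apply: eq_count => p /=.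
exact: (eqseq_cat_take_drop [:: _; _]).
Qed.

Lemma pos_entries_Phi i u : pos_entries (Phi i u).
Proof.
elim: i u => [|i IH] u //=; rewrite new_vecE //=.
apply: pos_entries_foldl => //; apply/all_allpairsP => v kc _ kc_Phi.
exact: (allP (IH v) _ kc_Phi).
Qed.

Lemma Phi_S i u : Phi i.+1 u =
  foldl (@sv_add_pair L) [::]
    [seq extend_entry tauV tauE u v kc | v <- nbrs e u, kc <- Phi i v].
Proof. by rewrite /= new_vecE //; apply: pos_entries_Phi. Qed.

Lemma uniq_keys_Phi i u : uniq (keys (Phi i u)).
Proof. by case: i => [|i] //; rewrite Phi_S; apply: uniq_keys_foldl. Qed.

Lemma sv_get_Phi i u s : sv_get (Phi i u) s = walk_count i u s.
Proof.
elim: i u s => [|i IH] u s; first by rewrite /walk_count /=; case: eqP.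
rewrite Phi_S sv_get_foldl add0n big_allpairs_dep walk_count_S.
apply: eq_bigr => v _; rewrite -IH sv_get_sum ?uniq_keys_Phi // big_distrr.
by apply: eq_bigr => kc _ /=; rewrite (eqseq_cat_take_drop [:: _; _]) mulnA mulnb.
Qed.

Lemma sv_get_walk_algo l s :
  sv_get (walk_algo e tauV tauE l) s = phi_eq e tauV tauE l s.
Proof.
rewrite /walk_algo sum_vecsE sv_get_foldl add0n big_flatten big_map phi_eqE.
by apply: eq_bigr => v _; rewrite -sv_get_sum ?uniq_keys_Phi // sv_get_Phi.
Qed.

Lemma size_Phi_le_nlabels i u : size (Phi i u) <= nlabels e tauV tauE i u.
Proof.
rewrite -(size_map fst); apply: uniq_leq_size (uniq_keys_Phi i u) _ => k.
move/(sv_get_gt0 (pos_entries_Phi i u)); rewrite sv_get_Phi -has_count.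
by case/hasP => p pw /eqP <-; rewrite mem_undup map_f.
Qed.

Lemma size_Phi_S i u : size (Phi i.+1 u) <= \sum_(v <- nbrs e u) size (Phi i v).
Proof.
rewrite Phi_S; apply: leq_trans (size_foldl_sv_add _ _) _.
by rewrite add0n size_allpairs_dep sumnE big_map.
Qed.

Lemma lab_rcons u p y :
  lab u (rcons p y) = lab u p ++ [:: tauE [set last u p; y]; tauV y].
Proof. by elim: p u => [|x p IH] u //=; rewrite IH. Qed.

Lemma size_lab u p : size (lab u p) = (size p).*2.+1.
Proof. by elim: p u => [|x p IH] u //=; rewrite IH doubleS. Qed.

Hypothesis e_sym : symmetric e.

Lemma nlabels_leS k v :
  0 < k -> nlabels e tauV tauE k v <= nlabels e tauV tauE k.+1 v.
Proof.
move=> k_gt0; rewrite /nlabels.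
apply: (@leq_size_undup_map _ _ (take k.*2.+1)) => s /mapP [p].
rewrite mem_walks => /andP [/eqP size_p path_p] ->.
case/lastP: p size_p path_p => [k0|q x size_qx path_qx]; first by rewrite -k0 in k_gt0.
have back_edge : e (last v q) x by move: path_qx; rewrite rcons_path => /andP [].
rewrite -map_comp; apply/mapP; exists (rcons (rcons q x) (last v q)).
  by rewrite mem_walks size_rcons size_qx eqxx rcons_path path_qx last_rcons e_sym.
by rewrite /= (lab_rcons v (rcons q x)) -size_qx -(size_lab v) take_size_cat.
Qed.

(* The bound 0 < i matters: an isolated vertex has one 0-walk but no 1-walk. *)
Lemma nlabels_mono i j v :
  0 < i -> i <= j -> nlabels e tauV tauE i v <= nlabels e tauV tauE j v.
Proof.
case: i => // i _; case: j => // j; rewrite ltnS.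
exact: (homo_leq (f := fun n => nlabels e tauV tauE n.+1 v) leqnn leq_trans
                 (fun n => nlabels_leS v (ltn0Sn n))).
Qed.

End Invariant.

Section Cost.
Variables (L V : finType) (e : rel V) (tauV : V -> L) (tauE : {set V} -> L).
Hypothesis e_sym : symmetric e.
Notation Phi i := (iter_phi e tauV tauE i).1.
Notation smax := (smax e tauV tauE).
Notation degsum := (\sum_(u : V) size (nbrs e u)).

Lemma size_Phi_le_smax l i v : i < l -> size (Phi i v) <= smax l.
Proof.
case: i => [|i] lt_il; first exact: leq_maxl.
apply: leq_trans (size_Phi_le_nlabels _ _ _ _ _) _.
have le_il : i.+1 <= l.-1 by case: l lt_il.
apply: leq_trans (nlabels_mono _ _ e_sym v (ltn0Sn i) le_il) _.
by rewrite -nlabseq_fromE (leq_trans _ (leq_maxr _ _)) // leq_bigmax.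
Qed.

Lemma sum_size_nbrs_Phi l i u :
  i < l -> \sum_(v <- nbrs e u) size (Phi i v) <= size (nbrs e u) * smax l.
Proof.
move=> lt_il; apply: (@leq_trans (\sum_(v <- nbrs e u) smax l)).
  by apply: leq_sum => v _; apply: size_Phi_le_smax.
by rewrite big_const_seq count_predT iter_addn_0 mulnC.
Qed.

Lemma new_vec_cost l i : i < l ->
  \sum_(u : V) (new_vec e tauV tauE (Phi i) u).2 <= #|V| + degsum * (smax l).+1.
Proof.
move=> lt_il; rewrite big_distrl /= -sum1_card -big_split leq_sum // => u _.
rewrite new_vecE /=; last exact: pos_entries_Phi.
under eq_bigr do rewrite -add1n.
rewrite big_split sum1_size /= add1n ltnS mulnS leq_add2l.
exact: sum_size_nbrs_Phi.
Qed.

Lemma iter_phi_cost l i : i <= l ->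
  (iter_phi e tauV tauE i).2 <= #|V| + i * (#|V| + degsum * (smax l).+1).
Proof.
elim: i => [|i IH] le_il /=; first by rewrite addn0.
rewrite mulSn addnCA addnC; apply: leq_add; first exact: new_vec_cost.
exact/IH/ltnW.
Qed.

Lemma sum_vecs_cost l : (sum_vecs (Phi l)).2 <= 2 * #|V| + l * (degsum * smax l).
Proof.
rewrite sum_vecsE big_enum /=; under eq_bigr do rewrite -add1n.
rewrite big_split sum1_card /= mul2n -addnn -addnA leq_add2l.
case: l => [|i]; first by rewrite /= sum1_card leq_addr.
apply: (@leq_trans (\sum_(v : V) \sum_(w <- nbrs e v) size (Phi i w))).
  by apply: leq_sum => v _; apply: size_Phi_S.
apply: (@leq_trans (degsum * smax i.+1)); last by rewrite mulSn addnCA leq_addr.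
by rewrite big_distrl leq_sum // => v _; apply: sum_size_nbrs_Phi.
Qed.

Lemma walk_algo_cost_le l : walk_algo_cost e tauV tauE l <=
  3 * #|V| + l * (#|V| + degsum * (2 * smax l).+1).
Proof.
have := iter_phi_cost (leqnn l); have := sum_vecs_cost l.
rewrite /walk_algo_cost; lia.
Qed.

End Cost.

Theorem theorem2 :
  exists c : nat,
  forall (L V : finType) (e : rel V) (tauV : V -> L) (tauE : {set V} -> L)
         (l : nat),
    symmetric e -> irreflexive e ->
    (forall s : seq L, sv_get (walk_algo e tauV tauE l) s = phi_eq e tauV tauE l s)
    /\
    walk_algo_cost e tauV tauE l <=
      c * (nverts V + l * (nverts V + nedges e) * smax e tauV tauE l).
Proof.
exists 6 => L V e tauV tauE l e_sym _; split; first exact: sv_get_walk_algo.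
apply: leq_trans (walk_algo_cost_le tauV tauE e_sym l) _.
have deg_le := sum_size_nbrs e.
have : 0 < smax e tauV tauE l by apply: leq_maxl.
rewrite /nverts; set S := smax _ _ _ _; set D := \sum_(u : V) _ => S_gt0.
have ln_le : l * #|V| <= l * #|V| * S by rewrite leq_pmulr.
have lDS_le : l * (D * S) <= l * (2 * nedges e * S).
  by rewrite leq_mul2l leq_mul2r deg_le !orbT.
have lD_le : l * D <= l * (D * S) by rewrite leq_mul2l leq_pmulr ?orbT.
lia.
Qed.
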